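(* Let $\mathbf e_1,\dots,\mathbf e_n\in\mathbb R^n$ be linearly independent, let $K=\{\sum_{i=1}^n\lambda^i\mathbf e_i:\lambda^i\ge 0\}$, and for each $i$ let $\mathbf u_i\in\mathbb R^n$ satisfy $\mathbf e_j^\top\mathbf u_i=0$ for $j\neq i$ and $\mathbf e_i^\top\mathbf u_i=-1$, so that $K^\circ=\{\sum_{i=1}^n\mu^i\mathbf u_i:\mu^i\ge 0\}$. Let $N=\{1,\dots,n\}$ and let $\mathbf x\in\mathbb R^n$. For each subset $I\subset N$, with complement $I^c=N\setminus I$, $\mathbf x$ can be represented in the form $$\mathbf x=\sum_{i\in I}\alpha^i\mathbf e_i+\sum_{j\in I^c}\beta^j\mathbf u_j$$ with real numbers $\alpha^i,\beta^j$. Among the subsets $I\subset N$ (the cases $I=\emptyset$ and $I=N$ included) there exists exactly one for which the coefficients in this representation satisfy $\beta^j>0$ for all $j\in I^c$ and $\alpha^i\ge 0$ for all $i\in I$. For this representation, $$\mathbf P_K\mathbf x=\sum_{i\in I}\alpha^i\mathbf e_i\ (\alpha^i\ge 0)\quad\text{and}\quad \mathbf P_{K^\circ}\mathbf x=\sum_{j\in I^c}\beta^j\mathbf u_j\ (\beta^j>0).$$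
   Context: The polar of $K$ is $K^\circ=\{\mathbf y\in\mathbb R^n:\mathbf y^\top\mathbf z\le 0\ \forall\mathbf z\in K\}$. For a nonempty closed convex set $C\subset\mathbb R^n$, $\mathbf P_C\mathbf x$ denotes the metric (Euclidean) projection of $\mathbf x$ onto $C$, i.e. the unique point of $C$ with $\|\mathbf x-\mathbf P_C\mathbf x\|=\min\{\|\mathbf x-\mathbf y\|:\mathbf y\in C\}$, where $\|\mathbf u\|=\sqrt{\mathbf u^\top\mathbf u}$. *)

From HB Require Import structures.
From mathcomp Require Import all_boot all_order all_algebra.
From mathcomp Require Import reals.
From Stdlib Require Import ClassicalEpsilon.
Set Implicit Arguments. Unset Strict Implicit. Unset Printing Implicit Defensive.
Import Order.TTheory GRing.Theory Num.Theory.
Local Open Scope ring_scope.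

Section Defs.
Variables (R : realType) (n : nat).

Definition dotv (u v : 'cV[R]_n) : R := (u^T *m v) 0 0.
Definition normv (u : 'cV[R]_n) : R := Num.sqrt (dotv u u).

Definition lin_indep (e : 'I_n -> 'cV[R]_n) : Prop :=
  forall lam : 'I_n -> R, \sum_(i < n) lam i *: e i = 0 -> forall i, lam i = 0.

Definition gen_cone (e : 'I_n -> 'cV[R]_n) (z : 'cV[R]_n) : Prop :=
  exists lam : 'I_n -> R, (forall i, 0 <= lam i) /\ z = \sum_(i < n) lam i *: e i.

Definition polar (K : 'cV[R]_n -> Prop) (y : 'cV[R]_n) : Prop :=
  forall z, K z -> dotv y z <= 0.

Definition is_proj (C : 'cV[R]_n -> Prop) (x p : 'cV[R]_n) : Prop :=
  C p /\ forall y, C y -> normv (x - p) <= normv (x - y).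

(* Metric projection P_C x: the (unique, for C nonempty closed convex)
   nearest point of C to x, chosen by Hilbert's epsilon. *)
Definition proj (C : 'cV[R]_n -> Prop) (x : 'cV[R]_n) : 'cV[R]_n :=
  epsilon (inhabits x) (is_proj C x).

End Defs.

(* Since [e_i . u_j = 0] for [i <> j], the families (e_i)_{i in I} and
   (u_j)_{j notin I} are mutually orthogonal, so together they are linearly
   independent and every x decomposes along them.  For a decomposition with
   alpha >= 0 and beta >= 0 the two parts are orthogonal and lie in K and K°
   respectively, so the obtuse-angle criterion identifies them with P_K x and
   P_K° x; I is then the zero set of the coefficients of P_K° x, whence
   uniqueness.  For existence, pick among the faces J on which the orthogonal
   projection of x has nonnegative coefficients one nearest to x.  Every
   point of K is at least as far from x as some such face projection, so a
   negative polar coefficient beta_k would allow to move along e_k closer to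
   x inside K, which is absurd. *)

From HB Require Import structures.
From mathcomp Require Import all_boot all_order all_algebra.
From mathcomp Require Import reals.
From Stdlib Require Import ClassicalEpsilon.
From mathcomp Require Import ring lra.
Set Implicit Arguments. Unset Strict Implicit. Unset Printing Implicit Defensive.
Import Order.TTheory GRing.Theory Num.Theory.
Local Open Scope ring_scope.

Definition supp (T : finType) (R : nmodType) (c : T -> R) := [set i | c i != 0].

(* Moving from [l] towards [a] until the first coordinate where [a] is
   negative reaches zero. *)
Lemma clip_toward (T : finType) (R : realFieldType) (l a : T -> R) i0 :
  (forall i, 0 <= l i) -> supp a \subset supp l -> a i0 < 0 ->
  exists2 t, 0 <= t <= 1 &
    let m i := l i + t * (a i - l i) in
    (forall i, 0 <= m i) /\ (#|supp m| < #|supp l|)%N.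
Proof.
move=> l_ge0 /subsetP sub_al ai0.
have l_gt0 i : a i < 0 -> 0 < l i.
  move=> ai; rewrite lt_def l_ge0 andbT.
  by have := sub_al i; rewrite !inE lt_eqF //; apply.
case: (@arg_minP _ _ _ i0 (fun i => a i < 0) (fun i => l i / (l i - a i)) ai0)
  => j aj j_min.
set t := l j / (l j - a j).
have la_gt0 i : a i < 0 -> 0 < l i - a i by move=> ai; have := l_gt0 i ai; lra.
have t_l i : a i < 0 -> t * (l i - a i) <= l i.
  by move=> ai; rewrite -ler_pdivlMr ?la_gt0 //; apply: j_min.
have t_ge0 : 0 <= t by rewrite divr_ge0 ?ltW ?la_gt0 ?l_gt0.
have t_le1 : t <= 1 by rewrite ler_pdivrMr ?la_gt0 // mul1r; lra.
exists t; first by rewrite t_ge0 t_le1.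
split=> [i|].
  case: (ltP (a i) 0) => [ai|]; first by have := t_l i ai; lra.
  by have := l_ge0 i; nra.
apply: (leq_ltn_trans (subset_leq_card (_ : _ \subset supp l :\ j))).
  apply/subsetP => i; rewrite !inE => mi; apply/andP; split.
    apply: contraNneq mi => ->.
    by rewrite -opprB mulrN /t divfK ?subrr // gt_eqF ?la_gt0.
  apply: contraNneq mi => li0.
  have : i \notin supp a by apply/negP => /sub_al; rewrite inE li0 eqxx.
  by rewrite inE negbK => /eqP ->; rewrite li0 subrr mulr0 addr0.
by rewrite [ltnRHS](cardsD1 j) inE gt_eqF ?l_gt0.
Qed.

Section EuclideanSpace.
Variables (R : realType) (n : nat).
Implicit Types (v w z : 'cV[R]_n).

Lemma dotvE v w : dotv v w = \sum_k v k 0 * w k 0.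
Proof. by rewrite /dotv mxE; apply: eq_bigr => k _; rewrite mxE. Qed.

Lemma dotvC v w : dotv v w = dotv w v.
Proof. by rewrite !dotvE; apply: eq_bigr => k _; rewrite mulrC. Qed.

Lemma dotvDl v w z : dotv (v + w) z = dotv v z + dotv w z.
Proof. by rewrite !dotvE -big_split; apply: eq_bigr => k _; rewrite !mxE mulrDl. Qed.

Lemma dotvZl a v w : dotv (a *: v) w = a * dotv v w.
Proof. by rewrite !dotvE mulr_sumr; apply: eq_bigr => k _; rewrite !mxE mulrA. Qed.

Lemma dotvNl v w : dotv (- v) w = - dotv v w.
Proof. by rewrite -scaleN1r dotvZl mulN1r. Qed.

Lemma dotvBl v w z : dotv (v - w) z = dotv v z - dotv w z.
Proof. by rewrite dotvDl dotvNl. Qed.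

Lemma dotv0l w : dotv 0 w = 0.
Proof. by rewrite -(scale0r 0) dotvZl mul0r. Qed.

Lemma dotvDr v w z : dotv z (v + w) = dotv z v + dotv z w.
Proof. by rewrite !(dotvC z) dotvDl. Qed.

Lemma dotvZr a v w : dotv w (a *: v) = a * dotv w v.
Proof. by rewrite !(dotvC w) dotvZl. Qed.

Lemma dotvNr v w : dotv w (- v) = - dotv w v.
Proof. by rewrite !(dotvC w) dotvNl. Qed.

Lemma dotvBr v w z : dotv z (v - w) = dotv z v - dotv z w.
Proof. by rewrite !(dotvC z) dotvBl. Qed.

Lemma dotv_suml (I : finType) (P : pred I) (F : I -> 'cV[R]_n) w :
  dotv (\sum_(i | P i) F i) w = \sum_(i | P i) dotv (F i) w.
Proof.
exact: (big_morph (fun v => dotv v w) (fun a b => dotvDl a b w) (dotv0l w)).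
Qed.

Lemma dotv_sumr (I : finType) (P : pred I) (F : I -> 'cV[R]_n) w :
  dotv w (\sum_(i | P i) F i) = \sum_(i | P i) dotv w (F i).
Proof. by rewrite dotvC dotv_suml; apply: eq_bigr => i _; rewrite dotvC. Qed.

Lemma dotvv_ge0 v : 0 <= dotv v v.
Proof. by rewrite dotvE sumr_ge0 // => k _; rewrite -expr2 sqr_ge0. Qed.

Lemma dotvv_eq0 v : (dotv v v == 0) = (v == 0).
Proof.
apply/idP/eqP => [|->]; last by rewrite dotv0l.
rewrite dotvE psumr_eq0 => [/allP v0|k _]; last by rewrite -expr2 sqr_ge0.
apply/matrixP => k j; rewrite (ord1 j) mxE.
by have := v0 k (mem_index_enum k); rewrite mulf_eq0 orbb => /eqP.
Qed.

Lemma dotvv_gt0 v : (0 < dotv v v) = (v != 0).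
Proof. by rewrite lt_def dotvv_ge0 dotvv_eq0 andbT. Qed.

Lemma dotvDD v w : dotv (v + w) (v + w) = dotv v v + 2 * dotv v w + dotv w w.
Proof. by rewrite dotvDl !dotvDr (dotvC w v) mulr2n mulrDl mul1r !addrA. Qed.

Lemma normv_le v w : (normv v <= normv w) = (dotv v v <= dotv w w).
Proof. by rewrite /normv ler_sqrt // dotvv_ge0. Qed.

Lemma proj_obtuse (C : 'cV[R]_n -> Prop) x p : C p ->
  (forall y, C y -> dotv (x - p) (y - p) <= 0) -> proj C x = p.
Proof.
move=> Cp obtuse.
have pythagoras_le y : C y ->
    dotv (x - p) (x - p) + dotv (y - p) (y - p) <= dotv (x - y) (x - y).
  move=> Cy; have -> : x - y = (x - p) + - (y - p) by rewrite opprB addrA subrK.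
  rewrite (dotvDD (x - p)) dotvNr dotvNl dotvNr opprK.
  by have := obtuse y Cy; lra.
have p_nearest : is_proj C x p.
  split=> // y Cy; rewrite normv_le; apply: le_trans (pythagoras_le y Cy).
  by rewrite lerDl dotvv_ge0.
have [Cq q_nearest] := epsilon_spec (inhabits x) (is_proj C x) (ex_intro _ p p_nearest).
rewrite -/(proj C x) in Cq q_nearest *.
have := q_nearest p Cp; rewrite normv_le => /(le_trans (pythagoras_le _ Cq)).
rewrite gerDl => qp_le0; apply/eqP; rewrite -subr_eq0 -dotvv_eq0.
by rewrite eq_le qp_le0 dotvv_ge0.
Qed.

Definition comb (v : 'I_n -> 'cV[R]_n) (c : 'I_n -> R) := \sum_i c i *: v i.

Definition restrict (J : {set 'I_n}) (c : 'I_n -> R) i := if i \in J then c i else 0.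

Definition supported_on (J : {set 'I_n}) (c : 'I_n -> R) :=
  forall i, i \notin J -> c i = 0.

Lemma restrict_supported J c : supported_on J (restrict J c).
Proof. by move=> i /negPf; rewrite /restrict => ->. Qed.

Lemma restrict_ge0 (J : {set 'I_n}) (c : 'I_n -> R) :
  (forall i, i \in J -> 0 <= c i) -> forall i, 0 <= restrict J c i.
Proof. by move=> c_ge0 i; rewrite /restrict; case: ifPn => // /c_ge0. Qed.

Lemma comb_supported (v : 'I_n -> 'cV[R]_n) (J : {set 'I_n}) c :
  supported_on J c -> \sum_(i in J) c i *: v i = comb v c.
Proof.
move=> Jc; rewrite big_mkcond; apply: eq_bigr => i _.
by case: ifPn => // /Jc ->; rewrite scale0r.
Qed.

Lemma comb_in_set (v : 'I_n -> 'cV[R]_n) (J : {set 'I_n}) c :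
  \sum_(i in J) c i *: v i = comb v (restrict J c).
Proof.
by rewrite big_mkcond; apply: eq_bigr => i _; rewrite /restrict; case: ifP; rewrite ?scale0r.
Qed.

Lemma comb_toward (v : 'I_n -> 'cV[R]_n) l a t :
  comb v (fun i => l i + t * (a i - l i)) = comb v l + t *: (comb v a - comb v l).
Proof.
rewrite /comb -sumrB scaler_sumr -big_split; apply: eq_bigr => i _ /=.
by rewrite scalerDl -scalerBl scalerA.
Qed.

Lemma comb_add_delta (v : 'I_n -> 'cV[R]_n) a k t :
  comb v (fun i => a i + (if i == k then t else 0)) = comb v a + t *: v k.
Proof.
rewrite /comb; under eq_bigr do rewrite scalerDl.
rewrite big_split /=; congr (_ + _).
by rewrite (bigD1 k) //= eqxx big1 ?addr0 // => i /negPf ->; rewrite scale0r.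
Qed.

Lemma lin_indep_spans (v : 'I_n -> 'cV[R]_n) : lin_indep v ->
  forall x, exists c, x = comb v c.
Proof.
move=> v_indep x.
pose A : 'M[R]_n := \matrix_(i, k) v i k 0.
have mulA (r : 'rV[R]_n) : r *m A = (comb v (fun i => r 0 i))^T.
  apply/matrixP => i k; rewrite !mxE summxE.
  by apply: eq_bigr => j _; rewrite !mxE (ord1 i).
have A_unit : A \in unitmx.
  rewrite -row_free_unit; apply: inj_row_free => r; rewrite mulA => r0.
  have /v_indep r_eq0 : comb v (fun i => r 0 i) = 0 by apply: trmx_inj; rewrite r0 trmx0.
  by apply/rowP => i; rewrite mxE r_eq0.
exists (fun i => (x^T *m invmx A) 0 i).
by apply: trmx_inj; rewrite -mulA mulmxKV.
Qed.

End EuclideanSpace.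

Section Biorthogonal.
Variables (R : realType) (n : nat) (e u : 'I_n -> 'cV[R]_n).
Hypothesis hu : forall i j : 'I_n, dotv (e j) (u i) = if j == i then -1 else 0.

Lemma dotv_e_comb_u k b : dotv (e k) (comb u b) = - b k.
Proof.
rewrite dotv_sumr (bigD1 k) //= big1 ?addr0 => [|j /negPf jk].
  by rewrite dotvZr hu eqxx mulrN1.
by rewrite dotvZr hu eq_sym jk mulr0.
Qed.

Lemma dotv_comb_e_u a b : dotv (comb e a) (comb u b) = - \sum_i a i * b i.
Proof.
rewrite dotv_suml -sumrN; apply: eq_bigr => i _.
by rewrite dotvZl dotv_e_comb_u mulrN.
Qed.

Lemma dotv_comb_compl (J : {set 'I_n}) a b :
  supported_on J a -> supported_on (~: J) b -> dotv (comb e a) (comb u b) = 0.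
Proof.
move=> Ja Jb; rewrite dotv_comb_e_u big1 ?oppr0 // => i _.
case: (boolP (i \in J)) => iJ; last by rewrite Ja ?mul0r.
by rewrite Jb ?mulr0 // in_setC iJ.
Qed.

Lemma comb_u_inj b b' : comb u b = comb u b' -> b =1 b'.
Proof.
move=> eq_bb' k.
by apply: oppr_inj; rewrite -!(dotv_e_comb_u k) eq_bb'.
Qed.

Lemma e_neq0 k : e k != 0.
Proof. by apply/eqP => ek0; have := hu k k; rewrite ek0 dotv0l eqxx; lra. Qed.

Lemma polar_comb_u b : (forall i, 0 <= b i) -> polar (gen_cone e) (comb u b).
Proof.
move=> b_ge0 _ [a [a_ge0 ->]].
rewrite dotvC dotv_comb_e_u oppr_le0 sumr_ge0 // => i _.
exact: mulr_ge0.
Qed.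

(* The two parts are orthogonal, so subtracting either one from [x] leaves
   the other, which lies in the opposite cone: the obtuse-angle criterion
   applies to both. *)
Lemma proj_sign_decomposition (I : {set 'I_n}) alpha beta x :
  x = \sum_(i in I) alpha i *: e i + \sum_(j in ~: I) beta j *: u j ->
  (forall j, j \in ~: I -> 0 <= beta j) -> (forall i, i \in I -> 0 <= alpha i) ->
  proj (gen_cone e) x = \sum_(i in I) alpha i *: e i /\
  proj (polar (gen_cone e)) x = \sum_(j in ~: I) beta j *: u j.
Proof.
rewrite !comb_in_set => -> /restrict_ge0 b_ge0 /restrict_ge0 a_ge0.
have orth := dotv_comb_compl (restrict_supported (J := I) alpha)
  (restrict_supported (J := ~: I) beta).
split; apply: proj_obtuse.
- by exists (restrict I alpha).
- move=> y Ky; rewrite addrC addKr dotvBr (dotvC _ (comb e _)) orth subr0.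
  exact: polar_comb_u.
- exact: polar_comb_u.
- move=> y Py; rewrite addrK dotvBr orth subr0 dotvC; apply: Py.
  by exists (restrict I alpha).
Qed.

(* Both decompositions give the same polar projection, whose coefficients
   vanish exactly on [I]. *)
Lemma sign_decomposition_unique (I I' : {set 'I_n}) alpha beta alpha' beta' x :
  x = \sum_(i in I) alpha i *: e i + \sum_(j in ~: I) beta j *: u j ->
  (forall j, j \in ~: I -> 0 < beta j) -> (forall i, i \in I -> 0 <= alpha i) ->
  x = \sum_(i in I') alpha' i *: e i + \sum_(j in ~: I') beta' j *: u j ->
  (forall j, j \in ~: I' -> 0 < beta' j) -> (forall i, i \in I' -> 0 <= alpha' i) ->
  I = I'.
Proof.
move=> x_eq b_gt0 a_ge0 x_eq' b_gt0' a_ge0'.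
have [_ polar_eq] := proj_sign_decomposition x_eq (fun j Ij => ltW (b_gt0 j Ij)) a_ge0.
have [_] := proj_sign_decomposition x_eq' (fun j Ij => ltW (b_gt0' j Ij)) a_ge0'.
rewrite polar_eq !comb_in_set => /comb_u_inj eq_b.
have memE (J : {set 'I_n}) (c : 'I_n -> R) : (forall j, j \in ~: J -> 0 < c j) ->
    J =i [pred k | restrict (~: J) c k == 0].
  move=> c_gt0 k; rewrite inE /restrict in_setC.
  by case: (boolP (k \in J)) => [_|kJ] /=; rewrite ?eqxx // gt_eqF ?c_gt0 ?in_setC.
by apply/setP => k; rewrite (memE _ _ b_gt0) (memE _ _ b_gt0') !inE eq_b.
Qed.

Hypothesis he : lin_indep e.

Lemma comb_mixed (J : {set 'I_n}) c :
  comb (fun i => if i \in J then e i else u i) c =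
  comb e (restrict J c) + comb u (restrict (~: J) c).
Proof.
rewrite -big_split; apply: eq_bigr => i _; rewrite /restrict in_setC.
by case: (i \in J); rewrite /= !scale0r ?addr0 ?add0r.
Qed.

(* Orthogonality of complementary parts forces both parts of a vanishing
   combination to vanish. *)
Lemma lin_indep_mixed (J : {set 'I_n}) :
  lin_indep (fun i => if i \in J then e i else u i).
Proof.
move=> c; rewrite -/(comb _ c) comb_mixed => /eqP; rewrite addr_eq0 => /eqP eq_eu.
have orth := dotv_comb_compl (restrict_supported (J := J) c)
  (restrict_supported (J := ~: J) c).
have e_part0 : comb e (restrict J c) = 0.
  by apply/eqP; rewrite -dotvv_eq0 {2}eq_eu dotvNr orth oppr0.
have u_part0 : restrict (~: J) c =1 fun => 0.
  have comb0 : comb u (fun => 0) = 0 by rewrite /comb big1 // => i _; rewrite scale0r.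
  by apply: comb_u_inj; rewrite comb0 -[LHS]opprK -eq_eu e_part0 oppr0.
move=> i; case: (boolP (i \in J)) => iJ.
  by have := he e_part0 i; rewrite /restrict iJ.
by have := u_part0 i; rewrite /restrict in_setC iJ.
Qed.

Lemma decomposition_exists (J : {set 'I_n}) x : exists a b,
  supported_on J a /\ supported_on (~: J) b /\ x = comb e a + comb u b.
Proof.
have [c ->] := lin_indep_spans (lin_indep_mixed (J := J)) x.
exists (restrict J c), (restrict (~: J) c).
by rewrite comb_mixed; split; last split; rewrite //; apply: restrict_supported.
Qed.

End Biorthogonal.

Section SignDecomposition.
Variables (R : realType) (n : nat) (e u : 'I_n -> 'cV[R]_n) (x : 'cV[R]_n).
Hypothesis hu : forall i j : 'I_n, dotv (e j) (u i) = if j == i then -1 else 0.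
Hypothesis he : lin_indep e.

Definition sqdist v := dotv (x - v) (x - v).

(* [comb e (face_coef J)] is the orthogonal projection of [x] onto the span
   of the [e i], [i \in J]. *)
Definition face_coef (J : {set 'I_n}) : 'I_n -> R :=
  proj1_sig (constructive_indefinite_description _ (decomposition_exists hu he J x)).

Lemma face_coefP J : exists b, supported_on J (face_coef J) /\
  supported_on (~: J) b /\ x = comb e (face_coef J) + comb u b.
Proof. by rewrite /face_coef; case: constructive_indefinite_description. Qed.

Definition feasible J := [forall i, 0 <= face_coef J i].

Lemma sqdist_face J l : supported_on J l ->
  let d := comb e (face_coef J) - comb e l in
  sqdist (comb e l) = sqdist (comb e (face_coef J)) + dotv d d.
Proof.
move=> Jl d; have [b [Ja [Jb x_eq]]] := face_coefP J.
have orth : dotv (comb u b) d = 0.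
  by rewrite dotvBr !(dotvC (comb u b)) !(dotv_comb_compl hu _ Jb) ?subr0.
have xa : x - comb e (face_coef J) = comb u b by rewrite x_eq addrC addKr.
have xl : x - comb e l = comb u b + d by rewrite /d -xa addrA subrK.
by rewrite /sqdist xa xl dotvDD orth mulr0 addr0.
Qed.

(* Clip towards the projection onto the face spanned by the support and
   recurse on the size of the support. *)
Lemma feasible_face_below l : (forall i, 0 <= l i) ->
  exists2 J, feasible J & sqdist (comb e (face_coef J)) <= sqdist (comb e l).
Proof.
have [k] := ubnP #|supp l|; elim: k l => // k IH l.
rewrite ltnS => supp_le l_ge0; set J := supp l; set a := face_coef J.
have Jl : supported_on J l by move=> i; rewrite inE negbK => /eqP.
have [b [Ja _]] := face_coefP J.
have face_le : sqdist (comb e a) <= sqdist (comb e l).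
  by rewrite (sqdist_face Jl) lerDl dotvv_ge0.
have [J_feas|] := boolP (feasible J); first by exists J.
rewrite negb_forall => /existsP [i0]; rewrite -ltNge => ai0.
have sub_al : supp a \subset J.
  by apply/subsetP => i; rewrite inE => ai; apply: contraNT ai => /Ja/eqP.
have [t /andP [t_ge0 t_le1] [m_ge0 supp_lt]] := clip_toward l_ge0 sub_al ai0.
set m := fun i => _ in m_ge0 supp_lt.
have [J' J'_feas J'_le] := IH m (leq_trans supp_lt supp_le) m_ge0.
exists J' => //; apply: le_trans J'_le _.
have Jm : supported_on J m.
  by move=> i iJ; rewrite /m /a Jl // Ja // subrr mulr0 addr0.
rewrite (sqdist_face Jm) (sqdist_face Jl) -/a lerD2l comb_toward.
have -> : comb e a - (comb e l + t *: (comb e a - comb e l)) =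
    (1 - t) *: (comb e a - comb e l) by rewrite scalerBl scale1r opprD addrA.
rewrite dotvZl dotvZr mulrA ler_piMl ?dotvv_ge0 //; nra.
Qed.

Lemma sqdist_add_e a b k t : x = comb e a + comb u b ->
  sqdist (comb e a + t *: e k) =
  sqdist (comb e a) + 2 * t * b k + t ^+ 2 * dotv (e k) (e k).
Proof.
move=> x_eq; have xa : x - comb e a = comb u b by rewrite x_eq addrC addKr.
rewrite /sqdist opprD addrA xa dotvDD dotvNl !dotvNr !dotvZl !dotvZr.
by rewrite (dotvC _ (e k)) dotv_e_comb_u //; ring.
Qed.

(* A face projection of minimal distance to [x] among those in the cone has
   nonnegative polar coefficients: otherwise moving along the [e k] whose
   coefficient is negative gets closer to [x] while staying in the cone. *)
Lemma sign_decomposition_exists : exists (I : {set 'I_n}) (alpha beta : 'I_n -> R),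
  x = \sum_(i in I) alpha i *: e i + \sum_(j in ~: I) beta j *: u j /\
  (forall j, j \in ~: I -> 0 < beta j) /\ (forall i, i \in I -> 0 <= alpha i).
Proof.
have empty_feas : feasible set0.
  by apply/forallP => i; have [b [J0 _]] := face_coefP set0; rewrite J0 ?inE.
have [J0 J0_feas J0_min] := @arg_minP _ _ _ set0 feasible
  (fun J => sqdist (comb e (face_coef J))) empty_feas.
set a := face_coef J0 in J0_feas J0_min *.
have [b [Ja [Jb x_eq]]] := face_coefP J0; rewrite -/a in Ja x_eq.
have b_ge0 k : 0 <= b k.
  rewrite leNgt; apply/negP => bk_lt0.
  have ek_gt0 : 0 < dotv (e k) (e k) by rewrite dotvv_gt0 (e_neq0 hu).
  pose t := - b k / dotv (e k) (e k).
  have t_gt0 : 0 < t by rewrite divr_gt0 // oppr_gt0.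
  have tE : t * dotv (e k) (e k) = - b k by rewrite /t divfK ?gt_eqF.
  have closer : sqdist (comb e a + t *: e k) < sqdist (comb e a).
    rewrite (sqdist_add_e _ _ x_eq) -[X in _ < X]addr0 -addrA ltrD2l.
    by rewrite expr2 -[t * t * _]mulrA tE; nra.
  have l_ge0 i : 0 <= a i + (if i == k then t else 0).
    by have := forallP J0_feas i; rewrite -/a; case: (i == k); lra.
  have [J J_feas J_le] := feasible_face_below l_ge0.
  have := le_lt_trans (le_trans (J0_min J J_feas) J_le).
  by rewrite comb_add_delta => /(_ _ closer); rewrite ltxx.
set I := J0 :|: [set k | b k == 0].
have Ia : supported_on I a by move=> i; rewrite inE negb_or => /andP [/Ja].
have Ib : supported_on (~: I) b.
  move=> j; rewrite in_setC negbK !inE => /orP [jJ0|/eqP //].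
  by rewrite Jb // in_setC jJ0.
exists I, a, b; rewrite !comb_supported //; split=> //; split=> [j|i _].
  by rewrite in_setC inE negb_or inE => /andP [_ bj]; rewrite lt_def bj b_ge0.
exact: (forallP J0_feas).
Qed.

End SignDecomposition.

Theorem theorem2 (R : realType) (n : nat) (e u : 'I_n -> 'cV[R]_n)
    (x : 'cV[R]_n)
    (he : lin_indep e)
    (hu : forall i j : 'I_n, dotv (e j) (u i) = if j == i then -1 else 0) :
  let K := gen_cone e in
  let Kpol := polar K in
  (forall I : {set 'I_n}, exists alpha beta : 'I_n -> R,
      x = \sum_(i in I) alpha i *: e i + \sum_(j in ~: I) beta j *: u j) /\
  (exists! I : {set 'I_n}, exists alpha beta : 'I_n -> R,
      x = \sum_(i in I) alpha i *: e i + \sum_(j in ~: I) beta j *: u j /\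
      (forall j, j \in ~: I -> 0 < beta j) /\
      (forall i, i \in I -> 0 <= alpha i)) /\
  (forall (I : {set 'I_n}) (alpha beta : 'I_n -> R),
      x = \sum_(i in I) alpha i *: e i + \sum_(j in ~: I) beta j *: u j ->
      (forall j, j \in ~: I -> 0 < beta j) ->
      (forall i, i \in I -> 0 <= alpha i) ->
      proj K x = \sum_(i in I) alpha i *: e i /\
      proj Kpol x = \sum_(j in ~: I) beta j *: u j).
Proof.
move=> K Kpol; split.
  move=> I; have [a [b [Ia [Ib ->]]]] := decomposition_exists hu he I x.
  by exists a, b; rewrite !comb_supported.
split; last first.
  move=> I alpha beta x_eq b_gt0 a_ge0.
  by apply: (proj_sign_decomposition hu x_eq _ a_ge0) => j /b_gt0/ltW.
have [I [alpha [beta [x_eq [b_gt0 a_ge0]]]]] := sign_decomposition_exists x hu he.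
exists I; split; first by exists alpha, beta.
move=> I' [alpha' [beta' [x_eq' [b_gt0' a_ge0']]]].
exact: (sign_decomposition_unique hu x_eq b_gt0 a_ge0 x_eq' b_gt0' a_ge0').
Qed.
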